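(* Let $N$ be a positive integer and let the mesh $\Omega_N=\{\theta_{N,i}:i=-N,\dots,N\}$ satisfy $\theta_{N,-i}=-\theta_{N,i}$ for $i=1,\dots,N$. For $\lambda\in\mathbb{C}$ let $p_N(\cdot;\lambda)$ be the polynomial of degree at most $2N$ satisfying $p_N(0;\lambda)=1$ and $p_N'(\theta_{N,i};\lambda)=\lambda\,p_N(\theta_{N,i};\lambda)$ for $i\in\{-N,\dots,N\}\setminus\{0\}$. Let $\xi>0$ be such that $\det(D^TD-\xi^2I)\ne0$, and let $\omega\in\mathbb{R}$ be such that $p_N(\cdot;j\omega)$ is uniquely defined and $j\omega I-A_0-\sum_{i=1}^mA_ip_N(-\tau_i;j\omega)$ is nonsingular, so that $G_N(j\omega)=C\left(j\omega I-A_0-\sum_{i=1}^m A_ip_N(-\tau_i;j\omega)\right)^{-1}B+D$ is defined. Then the matrix $\mathcal{L}_\xi^N$ has the eigenvalue $\lambda=j\omega$ if and only if $G_N(j\omega)$ has a singular value equal to $\xi$.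
   Context: Let $n,m,n_u,n_y$ be positive integers, $A_0,\dots,A_m\in\mathbb{R}^{n\times n}$, $B\in\mathbb{R}^{n\times n_u}$, $C\in\mathbb{R}^{n_y\times n}$, $D\in\mathbb{R}^{n_y\times n_u}$, delays $\tau_1,\dots,\tau_m\ge0$, $\tau_{\max}=\max_i\tau_i>0$. For $\xi>0$ put $D_\xi=D^TD-\xi^2I_{n_u}$, $\tilde D_\xi=DD^T-\xi^2I_{n_y}$, and define $2n\times2n$ matrices $M_0=\begin{bmatrix} A_0-BD_\xi^{-1}D^TC & -BD_\xi^{-1}B^T\\ \xi^2 C^T\tilde D_\xi^{-1}C & -A_0^T+C^TDD_\xi^{-1}B^T\end{bmatrix}$, $M_i=\begin{bmatrix}A_i&0\\0&0\end{bmatrix}$, $M_{-i}=\begin{bmatrix}0&0\\0&-A_i^T\end{bmatrix}$, $1\le i\le m$. A mesh $\Omega_N$ consists of $2N+1$ points $-\tau_{\max}\le\theta_{N,-N}<\dots<\theta_{N,0}=0<\dots<\theta_{N,N}\le\tau_{\max}$. Let $X_N=(\mathbb{C}^{2n})^{2N+1}$ with elements $x=(x_{-N},\dots,x_N)$ and let $\mathcal{P}_Nx$ be the unique $\mathbb{C}^{2n}$-valued polynomial of degree $\le2N$ with $\mathcal{P}_Nx(\theta_{N,i})=x_i$. The matrix $\mathcal{L}_\xi^N:X_N\to X_N$ is defined by $(\mathcal{L}_\xi^Nx)_i=(\mathcal{P}_Nx)'(\theta_{N,i})$ for $i\neq0$ and $(\mathcal{L}_\xi^Nx)_0=M_0\mathcal{P}_Nx(0)+\sum_{i=1}^m\left(M_i\mathcal{P}_Nx(-\tau_i)+M_{-i}\mathcal{P}_Nx(\tau_i)\right)$.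 *)

(* Complex numbers: R[i] = complex R over an abstract real
   closed field R (the statement is purely algebraic). *)
From HB Require Import structures.
From mathcomp Require Import all_boot all_order all_algebra.
From mathcomp Require Import complex.
Set Implicit Arguments. Unset Strict Implicit. Unset Printing Implicit Defensive.
Import Order.TTheory GRing.Theory Num.Theory.
Local Open Scope ring_scope.

Section Defs.
Variable R : rcfType.
Local Notation C := R[i].
Local Notation toC := (real_complex R).

Definition Dxi (ny nu : nat) (D : 'M[R]_(ny, nu)) (xi : R) : 'M[R]_nu :=
  D^T *m D - (xi ^+ 2)%:M.
Definition tDxi (ny nu : nat) (D : 'M[R]_(ny, nu)) (xi : R) : 'M[R]_ny :=
  D *m D^T - (xi ^+ 2)%:M.

Definition Mzero (n nu ny : nat) (A0 : 'M[R]_n) (B : 'M[R]_(n, nu))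
  (Cm : 'M[R]_(ny, n)) (D : 'M[R]_(ny, nu)) (xi : R) : 'M[R]_(n + n) :=
  let Di := invmx (Dxi D xi) in
  let tDi := invmx (tDxi D xi) in
  block_mx (A0 - B *m Di *m D^T *m Cm) (- (B *m Di *m B^T))
           ((xi ^+ 2) *: (Cm^T *m tDi *m Cm)) (- A0^T + Cm^T *m D *m Di *m B^T).

Definition Mplus (n : nat) (Ai : 'M[R]_n) : 'M[R]_(n + n) := block_mx Ai 0 0 0.
Definition Mminus (n : nat) (Ai : 'M[R]_n) : 'M[R]_(n + n) := block_mx 0 0 0 (- Ai^T).

(* ---- mesh: theta_{N,i}, i = -N..N, is stored as theta (k : 'I_(2N+1))
   with i = k - N; the node theta_{N,0} is index k = N. ---- *)
Definition mid (N : nat) : 'I_(N.*2.+1) := inord N.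

Definition is_mesh (N : nat) (taumax : R) (theta : 'I_(N.*2.+1) -> R) : Prop :=
  [/\ forall k l : 'I_(N.*2.+1), (k < l)%N -> theta k < theta l,
      theta (mid N) = 0,
      - taumax <= theta ord0 &
      theta ord_max <= taumax].

Definition symmetric_mesh (N : nat) (theta : 'I_(N.*2.+1) -> R) : Prop :=
  forall k : 'I_(N.*2.+1), theta (rev_ord k) = - theta k.

Definition lag (N : nat) (theta : 'I_(N.*2.+1) -> R) (k : 'I_(N.*2.+1)) : {poly C} :=
  (\prod_(l | l != k) (toC (theta k) - toC (theta l)))^-1 *:
    \prod_(l | l != k) ('X - (toC (theta l))%:P).

(* X_N = (C^{2n})^{2N+1}: column k of x is x_{k-N}.
   P_N x (t) and (P_N x)'(t), the unique interpolating polynomial of degree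
   <= 2N (written in Lagrange form) and its derivative, evaluated at t. *)
Definition PN (d N : nat) (theta : 'I_(N.*2.+1) -> R) (x : 'M[C]_(d, N.*2.+1))
  (t : C) : 'cV[C]_d :=
  \sum_k (lag theta k).[t] *: col k x.
Definition dPN (d N : nat) (theta : 'I_(N.*2.+1) -> R) (x : 'M[C]_(d, N.*2.+1))
  (t : C) : 'cV[C]_d :=
  \sum_k ((lag theta k)^`()).[t] *: col k x.

Definition LxiN (n nu ny m N : nat) (A0 : 'M[R]_n) (A : 'I_m -> 'M[R]_n)
  (B : 'M[R]_(n, nu)) (Cm : 'M[R]_(ny, n)) (D : 'M[R]_(ny, nu))
  (tau : 'I_m -> R) (theta : 'I_(N.*2.+1) -> R) (xi : R)
  (x : 'M[C]_(n + n, N.*2.+1)) : 'M[C]_(n + n, N.*2.+1) :=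
  \matrix_(r, k)
    (if k == mid N then
       (map_mx toC (Mzero A0 B Cm D xi) *m PN theta x 0
        + \sum_(i < m) (map_mx toC (Mplus (A i)) *m PN theta x (toC (- tau i))
                        + map_mx toC (Mminus (A i)) *m PN theta x (toC (tau i)))) r 0
     else dPN theta x (toC (theta k)) r 0).


Definition pN_spec (N : nat) (theta : 'I_(N.*2.+1) -> R) (lam : C) (p : {poly C}) : Prop :=
  [/\ (size p <= N.*2.+1)%N,
      p.[0] = 1 &
      forall k : 'I_(N.*2.+1), k != mid N ->
        (p^`()).[toC (theta k)] = lam * p.[toC (theta k)]].

Definition singular_value (p q : nat) (G : 'M[C]_(p, q)) (s : R) : Prop :=
  0 <= s /\ eigenvalue ((map_mx (@conjc R) G)^T *m G) (toC (s ^+ 2)).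

End Defs.

From HB Require Import structures.
From mathcomp Require Import all_boot all_order all_algebra.
From mathcomp Require Import complex.
From mathcomp Require Import zify ring.
Import Order.TTheory GRing.Theory Num.Theory.
Local Open Scope ring_scope.

(* Let x be an eigenvector of L_xi^N for lambda.  Off the central node each row
   of x interpolates a polynomial q with q' = lambda q at the nodes, so by
   uniqueness of p_N every row is a multiple of p_N and x_k = p_N(theta_k) v.
   The central row then says M v = lambda v for the 2n x 2n matrix
   M = M_0 + sum_i (p_N(-tau_i) M_i + p_N(tau_i) M_{-i}), and conversely every
   such v gives an eigenvector of L_xi^N.  M has the block form of a Hamiltonian
   matrix; eliminating the input z = -D_xi^{-1} (D^T C u + B^T w), its eigenvector
   (u; w) for lambda corresponds to z != 0 with Gt(lambda) G(lambda) z = xi^2 z,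
   where Gt is the transfer matrix of the adjoint system.  On the imaginary axis
   the symmetry of the mesh gives p_N(t) = conj p_N(-t), whence Gt(j w) = G(j w)^H
   and xi^2 is an eigenvalue of G^H G. *)

Set Implicit Arguments.
Unset Strict Implicit.
Unset Printing Implicit Defensive.

Lemma eigenvalue_colP (F : fieldType) k (g : 'M[F]_k) a :
  reflect (exists2 v : 'cV_k, v != 0 & g *m v = a *: v) (eigenvalue g a).
Proof.
rewrite /eigenvalue /eigenspace kermx_eq0 row_free_unit unitmxE unitfE negbK.
rewrite -det_tr; apply: (iffP det0P) => -[v v0 hv]; exists v^T; rewrite ?trmx_eq0 //.
  apply/eqP; rewrite -subr_eq0 -mul_scalar_mx -mulmxBl.
  by rewrite -[_ - _]trmxK -trmx_mul hv trmx0.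
by rewrite -trmx_mul mulmxBl hv mul_scalar_mx subrr trmx0.
Qed.

Lemma mulmx_subr_scalar_eq (R : pzRingType) k l (a : R) (X : 'M[R]_k) (u y : 'M[R]_(k, l)) :
  ((a%:M - X) *m u = y) <-> (X *m u + y = a *: u).
Proof.
rewrite mulmxBl mul_scalar_mx; split => [<-|<-]; first by rewrite addrC subrK.
by rewrite addrC addKr.
Qed.

Lemma unitmx_mul_subr_scalar_swap (F : fieldType) k l (X : 'M[F]_(k, l)) (Y : 'M[F]_(l, k)) s :
  s != 0 -> X *m Y - s%:M \in unitmx -> Y *m X - s%:M \in unitmx.
Proof.
move=> s0 XY_unit; set M := invmx (X *m Y - s%:M).
have YXY : (Y *m X - s%:M) *m Y = Y *m (X *m Y - s%:M).
  by rewrite mulmxBl mulmxBr mulmxA mul_scalar_mx mul_mx_scalar.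
(* (YX - s)^-1 = s^-1 (Y (XY - s)^-1 X - 1) *)
suff /mulmx1_unit[] : (Y *m X - s%:M) *m (s^-1 *: (Y *m M *m X - 1%:M)) = 1%:M by [].
rewrite -scalemxAr mulmxBr mulmx1 !mulmxA YXY -(mulmxA Y) mulmxV // mulmx1.
by rewrite opprB addrC subrK scale_scalar_mx mulVf.
Qed.

Section Hamiltonian.
Variables (F : fieldType) (n nu ny : nat).
Variables (P Q : 'M[F]_n) (B : 'M[F]_(n, nu)) (C : 'M[F]_(ny, n)) (D : 'M[F]_(ny, nu)).
Variables (Bt : 'M[F]_(nu, n)) (Ct : 'M[F]_(n, ny)) (Dt : 'M[F]_(nu, ny)) (s lam : F).
Hypothesis s_neq0 : s != 0.
Hypothesis DtD_unit : Dt *m D - s%:M \in unitmx.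

Local Notation Di := (invmx (Dt *m D - s%:M)).
Local Notation tDi := (invmx (D *m Dt - s%:M)).

Lemma mulmx_invmx_DtD : D *m Di = tDi *m D.
Proof.
have DDt_unit := unitmx_mul_subr_scalar_swap s_neq0 DtD_unit.
have DDs : D *m (Dt *m D - s%:M) = (D *m Dt - s%:M) *m D.
  by rewrite mulmxBl mulmxBr mulmxA mul_scalar_mx mul_mx_scalar.
rewrite -[LHS](mulKmx DDt_unit) [_ *m (D *m _)]mulmxA -DDs -mulmxA.
by rewrite mulmxV // mulmx1.
Qed.

Lemma mulmx_invmx_DtD_Dt : D *m Di *m Dt = 1%:M + s *: tDi.
Proof.
have DDt_unit := unitmx_mul_subr_scalar_swap s_neq0 DtD_unit.
rewrite mulmx_invmx_DtD -mulmxA.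
have -> : tDi *m (D *m Dt) = tDi *m (D *m Dt - s%:M) + tDi *m s%:M.
  by rewrite -mulmxDr subrK.
by rewrite mulVmx // mul_mx_scalar.
Qed.

Definition hamiltonian_mx : 'M[F]_(n + n) :=
  block_mx (P - B *m Di *m Dt *m C) (- (B *m Di *m Bt))
           (s *: (Ct *m tDi *m C)) (- Q + Ct *m D *m Di *m Bt).

Definition feedback (u w : 'cV[F]_n) : 'cV[F]_nu := - (Di *m (Dt *m C *m u + Bt *m w)).

Lemma feedbackP u w (z : 'cV[F]_nu) :
  Bt *m w + Dt *m (C *m u + D *m z) = s *: z <-> z = feedback u w.
Proof.
have residual : (Dt *m D - s%:M) *m z + (Dt *m C *m u + Bt *m w)
         = Bt *m w + Dt *m (C *m u + D *m z) - s *: z.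
  rewrite mulmxBl mul_scalar_mx mulmxDr !mulmxA !addrA.
  by rewrite [LHS](ACl (((4 * 3) * 1) * 2)).
split => hz.
  rewrite /feedback -mulmxN; apply: (canRL (mulKmx DtD_unit)).
  by apply/eqP; rewrite -subr_eq0 opprK residual hz subrr.
by apply/eqP; rewrite -subr_eq0 -residual hz /feedback mulmxN mulKVmx // addNr.
Qed.

Lemma feedback_output u w :
  C *m u + D *m feedback u w = - (s *: (tDi *m C *m u) + D *m Di *m Bt *m w).
Proof.
rewrite /feedback mulmxN !mulmxDr !mulmxA mulmx_invmx_DtD_Dt !mulmxDl mul1mx.
by rewrite -!scalemxAl -addrA opprD addrA subrr add0r.
Qed.

Lemma hamiltonian_eigenP u w :
  hamiltonian_mx *m col_mx u w = lam *: col_mx u w <->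
  (lam%:M - P) *m u = B *m feedback u w /\
  ((- lam)%:M - Q) *m w = Ct *m (C *m u + D *m feedback u w).
Proof.
have top : (P - B *m Di *m Dt *m C) *m u + - (B *m Di *m Bt) *m w
           = P *m u + B *m feedback u w.
  by rewrite /feedback mulmxN !mulmxDr !mulmxA mulmxBl mulNmx opprD addrA.
have bot : s *: (Ct *m tDi *m C) *m u + (- Q + Ct *m D *m Di *m Bt) *m w
           = - (Q *m w + Ct *m (C *m u + D *m feedback u w)).
  rewrite feedback_output mulmxN opprD opprK mulmxDr -scalemxAl -scalemxAr.
  by rewrite !mulmxA mulmxDl mulNmx addrCA.
rewrite mul_block_col scale_col_mx top bot !mulmx_subr_scalar_eq scaleNr.
by split => [/eq_col_mx[-> <-]|[-> ->]]; rewrite opprK.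
Qed.

Hypothesis Delta_unit : lam%:M - P \in unitmx.
Hypothesis coDelta_unit : (- lam)%:M - Q \in unitmx.

Definition transfer : 'M[F]_(ny, nu) := C *m invmx (lam%:M - P) *m B + D.
Definition cotransfer : 'M[F]_(nu, ny) := Bt *m invmx ((- lam)%:M - Q) *m Ct + Dt.

Lemma output_transfer (u : 'cV[F]_n) (z : 'cV[F]_nu) :
  (lam%:M - P) *m u = B *m z -> C *m u + D *m z = transfer *m z.
Proof. by move=> hu; rewrite -[u](mulKmx Delta_unit) hu /transfer mulmxDl !mulmxA. Qed.

Theorem eigenvalue_hamiltonian :
  eigenvalue hamiltonian_mx lam = eigenvalue (cotransfer *m transfer) s.
Proof.
apply/eigenvalue_colP/eigenvalue_colP => -[v v_neq0 hv].
  rewrite -[v]vsubmxK in v_neq0 hv; move: v_neq0 hv.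
  set u := usubmx v; set w := dsubmx v => uw_neq0 /hamiltonian_eigenP[hu hw].
  set z := feedback u w in hu hw.
  have y_eq := output_transfer hu; rewrite y_eq in hw.
  have u_eq : u = invmx (lam%:M - P) *m (B *m z) by rewrite -hu mulKmx.
  have w_eq : w = invmx ((- lam)%:M - Q) *m (Ct *m (transfer *m z)).
    by rewrite -hw mulKmx.
  exists z.
    apply: contraNneq uw_neq0 => z0.
    by rewrite col_mx_eq0 u_eq w_eq z0 !mulmx0 !eqxx.
  have /feedbackP := erefl z; rewrite y_eq {1}w_eq => <-.
  by rewrite -mulmxA [in LHS]/cotransfer mulmxDl !mulmxA.
set u := invmx (lam%:M - P) *m (B *m v).
set w := invmx ((- lam)%:M - Q) *m (Ct *m (transfer *m v)).
have hu : (lam%:M - P) *m u = B *m v by rewrite mulKVmx.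
have y_eq := output_transfer hu.
have v_eq : v = feedback u w.
  apply/feedbackP; rewrite y_eq -[RHS]hv -mulmxA [in RHS]/cotransfer mulmxDl.
  by rewrite /w !mulmxA.
exists (col_mx u w).
  rewrite col_mx_eq0; apply: contra v_neq0 => /andP[/eqP u0 /eqP w0].
  by rewrite v_eq u0 w0 /feedback !(mulmx0, addr0) oppr0.
by apply/(hamiltonian_eigenP u w); rewrite -v_eq y_eq !mulKVmx.
Qed.

End Hamiltonian.

Section Interpolation.
Variables (R : rcfType) (N : nat) (theta : 'I_(N.*2.+1) -> R).
Hypothesis theta_inj : injective theta.
Local Notation C := R[i].
Local Notation node k := (real_complex R (theta k)).

Lemma horner_lag_node k l : (lag theta k).[node l] = (k == l)%:R.
Proof.
rewrite /lag hornerZ horner_prod.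
under [X in _ * X]eq_bigr do rewrite hornerXsubC.
have [<-|nkl] := eqVneq k l.
  rewrite mulVf //; apply/prodf_neq0 => j jk.
  by rewrite subr_eq0 (inj_eq (@complexI R)) (inj_eq theta_inj) eq_sym.
by rewrite [X in _ * X](bigD1 l) 1?eq_sym //= subrr mul0r mulr0.
Qed.

Lemma size_lag k : (size (lag theta k) <= N.*2.+1)%N.
Proof.
rewrite (leq_trans (size_scale_leq _ _)) // size_prod /=; last first.
  by move=> j _; rewrite polyXsubC_eq0.
rewrite (eq_bigr (fun=> 2%N)); last by move=> j _; rewrite size_XsubC.
rewrite sum_nat_const cardC1 card_ord /=; lia.
Qed.

Lemma poly_eq0_at_nodes (q : {poly C}) :
  (size q <= N.*2.+1)%N -> (forall k, q.[node k] = 0) -> q = 0.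
Proof.
move=> size_q q_nodes; apply/eqP; apply: contraTT size_q => q_neq0; rewrite -ltnNge.
have := @max_poly_roots _ q [seq node k | k <- enum 'I_(N.*2.+1)] q_neq0.
rewrite size_map size_enum_ord; apply.
  by apply/allP => _ /mapP [k _ ->]; apply/rootP/q_nodes.
by rewrite map_inj_uniq ?enum_uniq // => a b /(@complexI R) /theta_inj.
Qed.

Definition interp d (x : 'M[C]_(d, N.*2.+1)) (r : 'I_d) : {poly C} :=
  \sum_k x r k *: lag theta k.

Lemma size_interp d (x : 'M[C]_(d, N.*2.+1)) r : (size (interp x r) <= N.*2.+1)%N.
Proof.
rewrite (leq_trans (size_sum _ _ _)) //; apply/bigmax_leqP => k _.
exact: leq_trans (size_scale_leq _ _) (size_lag k).
Qed.

Lemma horner_interp_node d (x : 'M[C]_(d, N.*2.+1)) r l : (interp x r).[node l] = x r l.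
Proof.
rewrite horner_sum (bigD1 l) //= big1 ?addr0 => [|k kl].
  by rewrite hornerZ horner_lag_node eqxx mulr1.
by rewrite hornerZ horner_lag_node (negPf kl) mulr0.
Qed.

Lemma interp_unique d (x : 'M[C]_(d, N.*2.+1)) r (q : {poly C}) :
  (size q <= N.*2.+1)%N -> (forall k, q.[node k] = x r k) -> interp x r = q.
Proof.
move=> size_q q_nodes; apply/eqP; rewrite -subr_eq0; apply/eqP/poly_eq0_at_nodes.
  by rewrite (leq_trans (size_polyD _ _)) // geq_max size_interp size_polyN.
by move=> k; rewrite hornerD hornerN horner_interp_node q_nodes subrr.
Qed.

Lemma PN_interp d (x : 'M[C]_(d, N.*2.+1)) t r : PN theta x t r 0 = (interp x r).[t].
Proof.
rewrite /PN summxE horner_sum; apply: eq_bigr => k _.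
by rewrite !mxE [RHS]hornerZ mulrC.
Qed.

Lemma dPN_interp d (x : 'M[C]_(d, N.*2.+1)) t r :
  dPN theta x t r 0 = ((interp x r)^`()).[t].
Proof.
rewrite /dPN summxE /interp linear_sum horner_sum; apply: eq_bigr => k _.
by rewrite !mxE [in RHS]linearZ /= [RHS]hornerZ mulrC.
Qed.

Definition nodal_mx d (v : 'cV[C]_d) (q : {poly C}) : 'M[C]_(d, N.*2.+1) :=
  \matrix_(r, k) (q.[node k] * v r 0).

Lemma interp_nodal_mx d (v : 'cV[C]_d) (q : {poly C}) r :
  (size q <= N.*2.+1)%N -> interp (nodal_mx v q) r = v r 0 *: q.
Proof.
move=> size_q; apply: interp_unique => [|k].
  exact: leq_trans (size_scale_leq _ _) size_q.
by rewrite hornerZ mxE mulrC.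
Qed.

Lemma PN_nodal_mx d (v : 'cV[C]_d) (q : {poly C}) t :
  (size q <= N.*2.+1)%N -> PN theta (nodal_mx v q) t = q.[t] *: v.
Proof.
move=> size_q; apply/matrixP => r j; rewrite [j]ord1.
by rewrite PN_interp interp_nodal_mx // hornerZ mxE mulrC.
Qed.

Lemma dPN_nodal_mx d (v : 'cV[C]_d) (q : {poly C}) t :
  (size q <= N.*2.+1)%N -> dPN theta (nodal_mx v q) t = (q^`()).[t] *: v.
Proof.
move=> size_q; apply/matrixP => r j; rewrite [j]ord1.
by rewrite dPN_interp interp_nodal_mx // derivZ hornerZ mxE mulrC.
Qed.

End Interpolation.

Section CollocationEigen.
Variables (R : rcfType) (N : nat) (theta : 'I_(N.*2.+1) -> R).
Hypothesis theta_inj : injective theta.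
Hypothesis theta_mid : theta (mid N) = 0.
Local Notation C := R[i].
Local Notation toC := (real_complex R).
Local Notation node k := (toC (theta k)).
Variables (lam : C) (p : {poly C}).
Hypothesis pN_p : pN_spec theta lam p.
Hypothesis pN_unique : forall q, pN_spec theta lam q -> q = p.

Lemma nodal_mx_mid d (v : 'cV[C]_d) r : nodal_mx theta v p r (mid N) = v r 0.
Proof. by case: pN_p => _ p0 _; rewrite mxE theta_mid p0 mul1r. Qed.

Lemma interp_collocated d (x : 'M[C]_(d, N.*2.+1)) r :
  (forall k, k != mid N -> dPN theta x (node k) r 0 = lam * x r k) ->
  interp theta x r = x r (mid N) *: p.
Proof.
move=> x_coll; set q := interp theta x r.
have q0 : q.[0] = x r (mid N) by rewrite -(horner_interp_node theta_inj x r) theta_mid.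
case: pN_p => size_p p0 p_coll.
(* [q - q(0) p] satisfies the collocation conditions and vanishes at 0. *)
suff /eqP : p + (q - q.[0] *: p) = p.
  by rewrite -subr_eq0 addrAC subrr add0r subr_eq0 q0 => /eqP.
apply: pN_unique; split.
- rewrite (leq_trans (size_polyD _ _)) // geq_max size_p.
  rewrite (leq_trans (size_polyD _ _)) // geq_max size_interp // size_polyN.
  exact: leq_trans (size_scale_leq _ _) size_p.
- by rewrite !hornerD hornerN hornerZ p0 mulr1 subrr addr0.
move=> k k_mid.
have q_coll : (q^`()).[node k] = lam * q.[node k].
  by rewrite -dPN_interp x_coll // horner_interp_node.
rewrite !derivE !(hornerD, hornerN, hornerZ) p_coll // q_coll; ring.
Qed.

Lemma collocated_nodal_mx d (x : 'M[C]_(d, N.*2.+1)) :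
  (forall k r, k != mid N -> dPN theta x (node k) r 0 = lam * x r k) ->
  x = nodal_mx theta (col (mid N) x) p.
Proof.
move=> x_coll; apply/matrixP => r k.
rewrite -(horner_interp_node theta_inj x r k) interp_collocated => [|l l_mid].
  by rewrite hornerZ !mxE mulrC.
exact: x_coll.
Qed.

Variables (n nu ny m : nat) (A0 : 'M[R]_n) (A : 'I_m -> 'M[R]_n).
Variables (B : 'M[R]_(n, nu)) (Cm : 'M[R]_(ny, n)) (D : 'M[R]_(ny, nu)).
Variables (tau : 'I_m -> R) (xi : R).

Definition MpN : 'M[C]_(n + n) :=
  map_mx toC (Mzero A0 B Cm D xi)
  + \sum_(i < m) (p.[toC (- tau i)] *: map_mx toC (Mplus (A i))
                  + p.[toC (tau i)] *: map_mx toC (Mminus (A i))).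

Lemma LxiN_nodal_mx (v : 'cV[C]_(n + n)) :
  LxiN A0 A B Cm D tau theta xi (nodal_mx theta v p) =
  \matrix_(r, k) (if k == mid N then (MpN *m v) r 0
                  else lam * nodal_mx theta v p r k).
Proof.
case: pN_p => size_p p0 p_coll.
apply/matrixP => r k; rewrite mxE [RHS]mxE; case: eqP => [_ | /eqP k_mid].
  apply: (congr1 (fun M : 'cV_(n + n) => M r 0)).
  rewrite !PN_nodal_mx // p0 scale1r /MpN mulmxDl mulmx_suml; congr (_ + _).
  by apply: eq_bigr => i _; rewrite !PN_nodal_mx // mulmxDl -!scalemxAl -!scalemxAr.
by rewrite dPN_nodal_mx // !mxE p_coll // mulrA.
Qed.

Lemma LxiN_eigenP :
  (exists2 x, x != 0 & LxiN A0 A B Cm D tau theta xi x = lam *: x) <->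
  eigenvalue MpN lam.
Proof.
split => [[x x_neq0 Lx] | /eigenvalue_colP[v v_neq0 Mv]].
  have x_eq : x = nodal_mx theta (col (mid N) x) p.
    apply: collocated_nodal_mx => k r k_mid.
    by have := congr1 (fun M : 'M_(n + n, N.*2.+1) => M r k) Lx; rewrite !mxE (negPf k_mid).
  apply/eigenvalue_colP; exists (col (mid N) x).
    apply: contraNneq x_neq0 => v0; apply/eqP/matrixP => r k.
    by rewrite x_eq v0 !mxE mulr0.
  apply/matrixP => r j; rewrite [j]ord1.
  have := congr1 (fun M : 'M_(n + n, N.*2.+1) => M r (mid N)) Lx.
  by rewrite {1}x_eq LxiN_nodal_mx !mxE eqxx.
exists (nodal_mx theta v p).
  apply: contraNneq v_neq0 => x0; apply/eqP/matrixP => r j; rewrite [j]ord1.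
  by rewrite -nodal_mx_mid x0 !mxE.
apply/matrixP => r k; rewrite LxiN_nodal_mx mxE [RHS]mxE; case: eqP => [-> | //].
by rewrite Mv nodal_mx_mid mxE.
Qed.

End CollocationEigen.

Lemma is_mesh_inj (R : rcfType) N (taumax : R) (theta : 'I_(N.*2.+1) -> R) :
  is_mesh taumax theta -> injective theta.
Proof.
case=> theta_mono _ _ _ k l theta_kl; apply: val_inj.
have [/theta_mono|/theta_mono|//] := ltngtP k l; by rewrite theta_kl ltxx.
Qed.

Lemma rev_ord_mid N : rev_ord (mid N) = mid N.
Proof. by apply: val_inj; rewrite /= /mid inordK; lia. Qed.

Section ImaginaryAxis.
Variables (R : rcfType) (N : nat) (theta : 'I_(N.*2.+1) -> R).
Hypothesis theta_sym : symmetric_mesh theta.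
Local Notation toC := (real_complex R).
Variables (lam : R[i]) (p : {poly R[i]}).
Hypothesis lam_imaginary : conjc lam = - lam.
Hypothesis pN_p : pN_spec theta lam p.
Hypothesis pN_unique : forall q, pN_spec theta lam q -> q = p.

Lemma horner_conjc (q : {poly R[i]}) x : (map_poly conjc q).[x] = conjc q.[conjc x].
Proof. by rewrite -{1}[x]conjcK horner_map. Qed.

Lemma horner_pN_opp t : p.[toC t] = conjc p.[toC (- t)].
Proof.
case: (pN_p) => size_p p0 p_coll.
(* [t |-> conj p(-t)] solves the same collocation problem since the mesh is symmetric. *)
pose q := map_poly conjc p \Po (- 'X).
suff q_eq : q = p.
  by rewrite -[in LHS]q_eq horner_comp hornerN hornerX -rmorphN horner_conjc conjc_real.
have size_X : size (- 'X : {poly R[i]}) = 2 by rewrite size_polyN size_polyX.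
apply: pN_unique; split.
- by rewrite size_comp_poly2 // size_map_poly.
- by rewrite horner_comp hornerN hornerX oppr0 horner_conjc conjc0 p0 conjc1.
move=> k k_mid.
have rk_mid : rev_ord k != mid N.
  by apply: contra k_mid => /eqP rk; rewrite -(rev_ordK k) rk rev_ord_mid.
rewrite deriv_comp deriv_map derivN derivX hornerM !horner_comp.
rewrite !(hornerN, hornerX, hornerC) mulrN1 -rmorphN !horner_conjc conjc_real.
by rewrite -theta_sym p_coll // rmorphM /= lam_imaginary mulNr opprK.
Qed.

End ImaginaryAxis.

Lemma summx_block (V : nmodType) m1 m2 n1 n2 (I : Type) (r : seq I) (P : pred I)
    (Aul : I -> 'M[V]_(m1, n1)) (Aur : I -> 'M[V]_(m1, n2))
    (Adl : I -> 'M[V]_(m2, n1)) (Adr : I -> 'M[V]_(m2, n2)) :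
  \sum_(i <- r | P i) block_mx (Aul i) (Aur i) (Adl i) (Adr i) =
  block_mx (\sum_(i <- r | P i) Aul i) (\sum_(i <- r | P i) Aur i)
           (\sum_(i <- r | P i) Adl i) (\sum_(i <- r | P i) Adr i).
Proof.
elim: r => [|i r IH]; first by rewrite !big_nil block_mx0.
by rewrite !big_cons; case: (P i); rewrite IH ?add_block_mx.
Qed.

Lemma conjc_imaginary (R : rcfType) (omega : R) :
  conjc (Complex 0 1 * real_complex R omega) = - (Complex 0 1 * real_complex R omega).
Proof.
apply/eqP; rewrite eq_complex /= !mul0r !mulr0 !mul1r.
by apply/andP; split; apply/eqP; ring.
Qed.

Lemma map_conjc_real (R : rcfType) k l (X : 'M[R]_(k, l)) :
  map_mx conjc (map_mx (real_complex R) X) = map_mx (real_complex R) X.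
Proof. by apply/matrixP => i j; rewrite !mxE conjc_real. Qed.

(* [map_mxZ] with [conjc] itself rather than its rmorphism instance, which keeps
   kernel conversion cheap when the scalar is a polynomial evaluation. *)
Lemma map_conjcZ (R : rcfType) k l a (X : 'M[R[i]]_(k, l)) :
  map_mx conjc (a *: X) = conjc a *: map_mx conjc X.
Proof. exact: map_mxZ. Qed.

Section DelaySystem.
Variables (R : rcfType) (n nu ny m : nat) (A0 : 'M[R]_n) (A : 'I_m -> 'M[R]_n).
Variables (B : 'M[R]_(n, nu)) (Cm : 'M[R]_(ny, n)) (D : 'M[R]_(ny, nu)).
Variables (tau : 'I_m -> R) (xi : R) (p : {poly R[i]}).
Local Notation toC := (real_complex R).
Local Notation mC M := (map_mx toC M).
Local Notation delay_mx := (\sum_(i < m) p.[toC (- tau i)] *: mC (A i)).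
Local Notation codelay_mx := (\sum_(i < m) p.[toC (tau i)] *: (mC (A i))^T).

Lemma map_Dxi_unit :
  \det (Dxi D xi) != 0 -> (mC D)^T *m mC D - (toC (xi ^+ 2))%:M \in unitmx.
Proof.
have -> : (mC D)^T *m mC D - (toC (xi ^+ 2))%:M = mC (Dxi D xi).
  by rewrite map_mxB map_mxM map_trmx map_scalar_mx.
by rewrite map_unitmx unitmxE unitfE.
Qed.

Lemma MpN_hamiltonian :
  MpN p A0 A B Cm D tau xi =
  hamiltonian_mx (mC A0 + delay_mx) ((mC A0)^T + codelay_mx)
    (mC B) (mC Cm) (mC D) (mC B)^T (mC Cm)^T (mC D)^T (toC (xi ^+ 2)).
Proof.
have delay_block : \sum_(i < m) (p.[toC (- tau i)] *: mC (Mplus (A i))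
                                 + p.[toC (tau i)] *: mC (Mminus (A i)))
                   = block_mx delay_mx 0 0 (- codelay_mx).
  transitivity (\sum_(i < m) block_mx (p.[toC (- tau i)] *: mC (A i)) 0
                                      0 (- (p.[toC (tau i)] *: (mC (A i))^T))).
    apply: eq_bigr => i _.
    rewrite !map_block_mx !map_mx0 map_mxN map_trmx !scale_block_mx !scaler0.
    by rewrite add_block_mx !addr0 !add0r scalerN.
  by rewrite summx_block !big1_eq sumrN.
rewrite /MpN delay_block /Mzero map_block_mx add_block_mx !addr0.
rewrite !(map_mxB, map_mxN, map_mxM, map_mxD, map_mxZ, map_trmx, map_invmx, map_scalar_mx).
by rewrite /hamiltonian_mx opprD; congr block_mx; rewrite addrAC.
Qed.

Lemma transfer_delay lam :
  transfer (mC A0 + delay_mx) (mC B) (mC Cm) (mC D) lam =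
  mC Cm *m invmx (lam%:M - mC A0 - delay_mx) *m mC B + mC D.
Proof. by rewrite /transfer opprD addrA. Qed.

Hypothesis p_opp : forall t, p.[toC t] = conjc p.[toC (- t)].

Lemma trmx_conj_char_delay lam :
  (map_mx conjc (lam%:M - mC A0 - delay_mx))^T =
  (conjc lam)%:M - ((mC A0)^T + codelay_mx).
Proof.
rewrite !map_mxB map_scalar_mx map_conjc_real map_mx_sum !linearB /= tr_scalar_mx.
rewrite opprD addrA linear_sum; congr (_ - _); apply: eq_bigr => i _.
by rewrite map_conjcZ map_conjc_real linearZ /= -p_opp.
Qed.

Lemma cotransfer_delay lam :
  cotransfer ((mC A0)^T + codelay_mx) (mC B)^T (mC Cm)^T (mC D)^T (- conjc lam) =
  (map_mx conjc (mC Cm *m invmx (lam%:M - mC A0 - delay_mx) *m mC B + mC D))^T.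
Proof.
rewrite /cotransfer opprK -trmx_conj_char_delay -trmx_inv -map_invmx map_mxD !map_mxM.
by rewrite !map_conjc_real linearD /= !trmx_mul mulmxA.
Qed.

End DelaySystem.

Unset Implicit Arguments.

Theorem theorem3 (R : rcfType) (n nu ny m N : nat)
  (A0 : 'M[R]_n) (A : 'I_m -> 'M[R]_n) (B : 'M[R]_(n, nu))
  (Cm : 'M[R]_(ny, n)) (D : 'M[R]_(ny, nu))
  (tau : 'I_m -> R) (theta : 'I_(N.*2.+1) -> R) (xi omega : R) (p : {poly R[i]}) :
  (0 < n)%N -> (0 < nu)%N -> (0 < ny)%N -> (0 < m)%N ->
  (forall i, 0 <= tau i) ->
  0 < \big[Num.max/0]_(i < m) tau i ->
  (0 < N)%N ->
  is_mesh (\big[Num.max/0]_(i < m) tau i) theta ->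
  symmetric_mesh theta ->
  0 < xi ->
  \det (Dxi D xi) != 0 ->
  pN_spec theta (Complex 0 1 * real_complex R omega) p ->
  (forall q, pN_spec theta (Complex 0 1 * real_complex R omega) q -> q = p) ->
  let jw := Complex 0 1 * real_complex R omega in
  let Mw := jw%:M - map_mx (real_complex R) A0
            - \sum_(i < m) p.[real_complex R (- tau i)] *: map_mx (real_complex R) (A i) in
  Mw \in unitmx ->
  let G := map_mx (real_complex R) Cm *m invmx Mw *m map_mx (real_complex R) B
           + map_mx (real_complex R) D in
  (exists2 x : 'M[R[i]]_(n + n, N.*2.+1), x != 0 & LxiN A0 A B Cm D tau theta xi x = jw *: x)
  <-> singular_value G xi.
Proof.
move=> _ _ _ _ _ _ _ mesh theta_sym xi_gt0 detD pN_p pN_unique jw Mw Mw_unit G.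
have theta_mid : theta (mid N) = 0 by case: mesh.
have jw_imaginary : conjc jw = - jw := conjc_imaginary omega.
have p_opp := horner_pN_opp theta_sym jw_imaginary pN_p pN_unique.
apply: (iff_trans (LxiN_eigenP (is_mesh_inj mesh) theta_mid pN_p pN_unique A0 A B Cm D tau xi)).
rewrite MpN_hamiltonian eigenvalue_hamiltonian.
- rewrite transfer_delay -/Mw -/G -[jw in cotransfer _ _ _ _ jw]opprK -jw_imaginary.
  rewrite cotransfer_delay // -/Mw -/G /singular_value.
  by split => [|[]//]; split => //; exact: ltW.
- by rewrite fmorph_eq0 sqrf_eq0 gt_eqF.
- exact: map_Dxi_unit.
- by rewrite opprD addrA.
by rewrite -jw_imaginary -trmx_conj_char_delay // unitmx_tr map_unitmx.
Qed.
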